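(* Let $(L,A)$ be a semilattice diagram in $\mathbf{BAlg}_1$ and suppose the convolution algebra $\ell^1(L)$ has an identity element $u=\sum_{e\in L}\lambda_e e$ (with $\sum_e|\lambda_e|<\infty$). Then for every $x\in\mathcal A(L,A)$ we have $u\cdot x=x=x\cdot u$, where $\cdot$ denotes the $\ell^1(L)$-module action on $\mathcal A(L,A)$ described in the context.
   Context: A semilattice is a commutative semigroup $L$ in which every element is idempotent; it is partially ordered by $f\preceq e\iff ef=f$. $\ell^1(L)$ denotes the $\ell^1$-convolution algebra of the semigroup $L$. A semilattice diagram in $\mathbf{BAlg}_1$, written $(L,A)$, consists of a semilattice $L$, Banach algebras $(A_e)_{e\in L}$, and contractive algebra homomorphisms $\phi_{f,e}:A_e\to A_f$ for all $f\preceq e$ in $L$, such that $\phi_{e,e}=\mathrm{id}$ and $\phi_{g,f}\circ\phi_{f,e}=\phi_{g,e}$ whenever $g\preceq f\preceq e$. Its convolution algebra $\mathcal A(L,A)$ is the $\ell^1$-direct sum $\bigoplus^{\ell^1}_{e\in L}A_e$, with canonical inclusions $\iota_e:A_e\to\mathcal A(L,A)$, equipped with the bounded bilinear product determined by $\iota_e(a)\cdot\iota_f(b)=\iota_{ef}\big(\phi_{ef,e}(a)\phi_{ef,f}(b)\big)$ for $a\in A_e$, $b\in A_f$. The symmetric action of $\ell^1(L)$ on $\mathcal A(L,A)$ is the bounded bilinear action determined by $e\cdot\iota_i(a)=\iota_i(a)\cdot e=\iota_{ie}\phi_{ie,i}(a)$ for $i,e\in L$, $a\in A_i$. *)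

From HB Require Import structures.
From mathcomp Require Import all_boot all_order all_algebra finmap.
From mathcomp Require Import all_classical all_reals all_analysis.
Unset Strict Implicit. Unset Printing Implicit Defensive.
Import Order.TTheory GRing.Theory Num.Theory.
Import numFieldNormedType.Exports.
Local Open Scope ring_scope.
Local Open Scope classical_set_scope.

Local Open Scope fset_scope.
Definition totally {I : choiceType} : set_system {fset I} :=
  filter_from setT (fun A => [set B | A `<=` B]).

Definition partial_sum {I : choiceType} {V : zmodType} (x : I -> V)
  (J : {fset I}) : V := \sum_(i : J) x (val i).
Local Close Scope fset_scope.

Definition has_usum {I : choiceType} {K : numFieldType} {V : normedModType K}
  (x : I -> V) (s : V) : Prop :=
  (partial_sum x @ totally) --> s.

(* [l1fam x] : sum_i ||x i|| < oo, for a (possibly dependent) family of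
   vectors, given through the family of its norms. *)
Definition l1fam {I : choiceType} {K : numFieldType} (nx : I -> K) : Prop :=
  exists M : K, forall J : {fset I}, partial_sum nx J <= M.

Record semilattice := Semilattice {
  sl_car :> choiceType;
  sl_op : sl_car -> sl_car -> sl_car;
  sl_opA : associative sl_op;
  sl_opC : commutative sl_op;
  sl_opI : idempotent_op sl_op }.
Arguments sl_op {s}.

Definition sl_le {L : semilattice} (f e : L) : bool := sl_op e f == f.

Record BanachAlg (K : numFieldType) := BanachAlgebra {
  ba_car :> completeNormedModType K;
  ba_mul : ba_car -> ba_car -> ba_car;
  ba_mulA : associative ba_mul;
  ba_mulDl : forall a b c, ba_mul (a + b) c = ba_mul a c + ba_mul b c;
  ba_mulDr : forall a b c, ba_mul a (b + c) = ba_mul a b + ba_mul a c;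
  ba_mulZl : forall (k : K) a b, ba_mul (k *: a) b = k *: ba_mul a b;
  ba_mulZr : forall (k : K) a b, ba_mul a (k *: b) = k *: ba_mul a b;
  ba_normM : forall a b, `|ba_mul a b| <= `|a| * `|b| }.
Arguments ba_mul {K b0} : rename.

(* ---------- Semilattice diagrams in BAlg_1 ----------
   The connecting maps are given as a total family [phi f e : A e -> A f];
   only the maps with f <= e are meaningful, and all axioms are imposed only
   for those. *)
Record sl_diagram (K : numFieldType) (L : semilattice) := SlDiagram {
  dg_alg : L -> BanachAlg K;
  dg_phi : forall f e : L, dg_alg e -> dg_alg f;
  dg_phiD : forall f e, sl_le f e -> forall a b,
      dg_phi f e (a + b) = dg_phi f e a + dg_phi f e b;
  dg_phiZ : forall f e, sl_le f e -> forall (k : K) a,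
      dg_phi f e (k *: a) = k *: dg_phi f e a;
  dg_phiM : forall f e, sl_le f e -> forall a b,
      dg_phi f e (ba_mul a b) = ba_mul (dg_phi f e a) (dg_phi f e b);
  dg_phi_contr : forall f e, sl_le f e -> forall a, `|dg_phi f e a| <= `|a|;
  dg_phi_id : forall e a, dg_phi e e a = a;
  dg_phi_comp : forall g f e, sl_le g f -> sl_le f e -> forall a,
      dg_phi g f (dg_phi f e a) = dg_phi g e a }.
Arguments dg_alg {K L}.
Arguments dg_phi {K L}.

Definition in_l1 {K : numFieldType} {L : semilattice} (u : L -> K) : Prop :=
  l1fam (fun e => `|u e|).

(* terms of the convolution (u * v)(g) = sum_{(e,f) : e f = g} u(e) v(f) *)
Definition conv_terms {K : numFieldType} {L : semilattice} (u v : L -> K)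
  (g : L) : L * L -> K^o :=
  fun p => if sl_op p.1 p.2 == g then u p.1 * v p.2 else 0.

Definition l1_identity {K : numFieldType} {L : semilattice} (u : L -> K) : Prop :=
  in_l1 u /\
  forall v : L -> K, in_l1 v ->
    forall g : L, has_usum (conv_terms u v g) (v g : K^o)
               /\ has_usum (conv_terms v u g) (v g : K^o).

(* elements: families x = (x_e)_e, x_e in A_e, with sum_e ||x_e|| < oo
   (x = sum_e iota_e(x_e)) *)
Definition in_convalg {K : numFieldType} {L : semilattice} (D : sl_diagram K L)
  (x : forall e : L, dg_alg D e) : Prop :=
  l1fam (fun e => `|x e|).

(* The symmetric action of l^1(L) on A(L,A), being the bounded bilinear
   extension of  e . iota_i(a) = iota_i(a) . e = iota_{ie}(phi_{ie,i} a),
   has f-component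
     (u . x)_f = (x . u)_f = sum_{(e,i) : i e = f} u(e) phi_{f,i}(x_i). *)
Definition left_act_terms {K : numFieldType} {L : semilattice} (D : sl_diagram K L)
  (u : L -> K) (x : forall e : L, dg_alg D e) (f : L) : L * L -> dg_alg D f :=
  fun p => (* p = (e, i) *)
    if sl_op p.2 p.1 == f then u p.1 *: dg_phi D f p.2 (x p.2) else 0.

Definition right_act_terms {K : numFieldType} {L : semilattice} (D : sl_diagram K L)
  (x : forall e : L, dg_alg D e) (u : L -> K) (f : L) : L * L -> dg_alg D f :=
  fun p => (* p = (i, e) *)
    if sl_op p.1 p.2 == f then u p.2 *: dg_phi D f p.1 (x p.1) else 0.

Definition left_act_is {K : numFieldType} {L : semilattice} (D : sl_diagram K L)
  (u : L -> K) (x y : forall e : L, dg_alg D e) : Prop :=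
  forall f : L, has_usum (left_act_terms D u x f) (y f).

Definition right_act_is {K : numFieldType} {L : semilattice} (D : sl_diagram K L)
  (x : forall e : L, dg_alg D e) (u : L -> K) (y : forall e : L, dg_alg D e) : Prop :=
  forall f : L, has_usum (right_act_terms D x u f) (y f).

From HB Require Import structures.
From mathcomp Require Import all_boot all_order all_algebra finmap.
From mathcomp Require Import all_classical all_reals all_analysis.
Import Order.TTheory GRing.Theory Num.Theory.
Import numFieldNormedType.Exports.
Local Open Scope ring_scope.

(* Write [up f] for the set of [e] with [f <= e].  Evaluating [u * i = i] at
   [i] gives [\sum_(e in up i) u e = 1] for every [i].  Take a finite set [E0]
   carrying all but [1/2] of this sum for [i = f]: every [i] in [up f] lies
   below some element of [E0], since otherwise the whole mass [1] of [up i]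
   would sit outside [E0].  The element [1 - \prod_(c <- E0) (1 - c)] of
   [l^1(L)] is then a unit for all of [up f], so [u * v = v] forces [u] to
   coincide with it on [up f]: there [u] is a finite combination [w] with
   [(w * i)(f) = 1] if [i = f] and [0] otherwise.  The [f]-component of
   [u . x] only involves [u] on [up f], so its finite partial sums over
   rectangles are exactly [x_f], while the remaining terms are dominated by
   tails of the scalar sum [(u * |x|)(f) = |x_f|].  The right action is the
   left one with the pairs of indices swapped. *)

Lemma partial_sumE {I : choiceType} {V : zmodType} (x : I -> V) (J : {fset I}) :
  partial_sum x J = \sum_(p <- J) x p.
Proof. by rewrite /partial_sum big_seq_fsetE. Qed.

Lemma big_fsetU_disjoint {I : choiceType} {V : zmodType} (A B : {fset I})
    (F : I -> V) :
  [disjoint A & B]%fset ->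
  \sum_(p <- (A `|` B)%fset) F p = \sum_(p <- A) F p + \sum_(p <- B) F p.
Proof.
move=> /fdisjointP dAB; rewrite (big_fsetID _ (mem A)) /=; congr (_ + _).
  by apply: eq_fbigl => p; rewrite !inE; case: (p \in A); rewrite ?andbT ?andbF.
apply: eq_fbigl => p; rewrite !inE /=.
by case: (boolP (p \in A)) => [/dAB/negbTE->|]; rewrite ?andbT ?andbF.
Qed.

Section UnorderedSum.
Context {I : choiceType} {K : numFieldType} {V : normedModType K}.
Implicit Types (x y : I -> V) (s t : V) (J : {fset I}).

Lemma has_usumP x s : has_usum x s <->
  (forall e : K, 0 < e -> exists J0, forall J,
     (J0 `<=` J)%fset -> `|s - \sum_(p <- J) x p| < e).
Proof.
split=> [xs e e0|xs A /nbhs_ballP[e e0 sA]].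
  have [J0 _ J0e] := xs _ (nbhsx_ballx s e e0).
  by exists J0 => J /J0e; rewrite /= -ball_normE /= partial_sumE.
have [J0 J0e] := xs e e0.
by exists J0 => // J /J0e sJ; apply: sA; rewrite -ball_normE /= partial_sumE.
Qed.

Lemma eq_has_usum x y s : x =1 y -> has_usum x s -> has_usum y s.
Proof.
move=> xy /has_usumP xs; apply/has_usumP => e e0; have [J0 J0e] := xs e e0.
by exists J0 => J /J0e; rewrite (eq_bigr _ (fun p _ => xy p)).
Qed.

Lemma has_usum_tail x s : has_usum x s -> forall e : K, 0 < e ->
  exists J0, forall J, [disjoint J0 & J]%fset -> `|\sum_(p <- J) x p| < e.
Proof.
move=> /has_usumP xs e e0; have [J0 J0e] := xs (e / 2) (divr_gt0 e0 (ltr0Sn _ 1)).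
exists J0 => J dJ.
have := J0e _ (fsubsetUl J0 J); rewrite big_fsetU_disjoint //.
have := J0e _ (fsubset_refl J0).
set S0 := \sum_(p <- J0) _; set S1 := \sum_(p <- J) _ => S0e S1e.
have -> : S1 = (s - S0) - (s - (S0 + S1)).
  by rewrite opprB addrC addrA addrNK [S0 + S1]addrC addrK.
by rewrite (splitr e) (le_lt_trans (ler_normB _ _)) ?ltrD.
Qed.

Lemma has_usum_cofinal x s t : has_usum x s ->
  (forall J0, exists2 J, (J0 `<=` J)%fset & \sum_(p <- J) x p = t) -> s = t.
Proof.
move=> /has_usumP xs Jt; apply/eqP; rewrite -subr_eq0 -normr_le0.
apply/ler_addgt0Pr => e e0; have [J0 J0e] := xs e e0.
by have [J J0J <-] := Jt J0; rewrite add0r ltW ?J0e.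
Qed.

Lemma has_usum_invol (f : I -> I) x s : involutive f ->
  has_usum x s -> has_usum (x \o f) s.
Proof.
move=> fK /has_usumP xs; apply/has_usumP => e e0; have [J0 J0e] := xs e e0.
exists (f @` J0)%fset => J J0J.
have -> : \sum_(p <- J) (x \o f) p = \sum_(p <- (f @` J)%fset) x p.
  by rewrite big_imfset //=; apply: in2W; apply: can_inj fK.
apply: J0e.
apply/fsubsetP => p pJ0; rewrite -[p]fK; apply/imfsetP; exists (f p) => //.
by apply: (fsubsetP J0J); apply/imfsetP; exists p.
Qed.

End UnorderedSum.

Lemma big_seq_partition {T : eqType} {I : Type} {V : zmodType} (r : seq I)
    (s : seq T) (P : pred I) (k : I -> T) (F : I -> V) :
  uniq s -> (forall p, P p -> k p \in s) ->
  \sum_(p <- r | P p) F p = \sum_(d <- s) \sum_(p <- r | P p && (k p == d)) F p.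
Proof.
move=> us sk; rewrite [RHS](exchange_big_dep P) /=; last by move=> ? ? _ /andP[].
apply: eq_bigr => p Pp; rewrite Pp -big_filter.
suff -> : [seq d <- s | k p == d] = [:: k p] by rewrite big_seq1.
by rewrite (@eq_filter _ _ (pred1 (k p))) ?filter_pred1_uniq ?sk.
Qed.

Lemma big_fset_pairs {T1 T2 : choiceType} {V : zmodType} (J : {fset T1 * T2})
    (A : seq T1) (B : seq T2) (F : T1 * T2 -> V) :
  uniq A -> uniq B -> {subset [seq (a, b) | a <- A, b <- B] <= J} ->
  \sum_(p <- J | (p.1 \in A) && (p.2 \in B)) F p =
  \sum_(a <- A) \sum_(b <- B) F (a, b).
Proof.
move=> uA uB ABJ; rewrite -big_filter -big_allpairs; apply/perm_big/uniq_perm.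
- exact/filter_uniq/fset_uniq.
- by apply: allpairs_uniq => // -[? ?] [? ?].
move=> p; rewrite mem_filter; apply/andP/allpairsP => [[/andP[pA pB] _]|].
  by exists p; case: p pA pB.
case=> -[a b] /= [aA bB ->]; split; first exact/andP.
by apply: ABJ; apply/allpairsP; exists (a, b).
Qed.

Section Semilattice.
Context {L : semilattice}.
Implicit Types a b c : L.

Lemma sl_le_refl a : sl_le a a.
Proof. exact/eqP/sl_opI. Qed.

Lemma sl_le_trans a b c : sl_le a b -> sl_le b c -> sl_le a c.
Proof. by move=> /eqP ab /eqP bc; apply/eqP; rewrite -{1}ab sl_opA bc ab. Qed.

Lemma sl_le_opl a b : sl_le (sl_op a b) a.
Proof. by apply/eqP; rewrite sl_opA sl_opI. Qed.

Lemma sl_le_opr a b : sl_le (sl_op a b) b.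
Proof. by rewrite sl_opC; apply: sl_le_opl. Qed.

End Semilattice.
Arguments sl_le_trans {L a b c}.

Section FiniteCombinations.
Context {K : numFieldType} {L : semilattice}.
Implicit Types (s : seq L) (w : seq (K * L)).

Definition fin_comb w (h : L) : K := \sum_(p <- w) p.1 * (p.2 == h)%:R.

Lemma fin_comb_notin w h : h \notin [seq p.2 | p <- w] -> fin_comb w h = 0.
Proof.
move=> hw; rewrite /fin_comb big_seq big1 // => p pw.
by case: eqP => [ph|_]; [rewrite -ph map_f in hw | rewrite mulr0].
Qed.

Lemma in_l1_fin_comb w : in_l1 (fin_comb w).
Proof.
exists (\sum_(p <- w) `|p.1|) => J; rewrite partial_sumE.
apply: (@le_trans _ _ (\sum_(h <- J) \sum_(p <- w) `|p.1| * (p.2 == h)%:R)).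
  apply: ler_sum => h _; apply: (le_trans (ler_norm_sum _ _ _)).
  by apply: ler_sum => p _; rewrite normrM normr_nat.
rewrite exchange_big /=; apply: ler_sum => p _; rewrite -mulr_sumr ler_piMr //.
case: (boolP (p.2 \in (J : seq L))) => pJ.
  rewrite (bigD1_seq p.2) ?fset_uniq //= eqxx big1 ?addr0 // => h.
  by rewrite eq_sym => /negbTE ->.
by rewrite big_seq big1 // => h hJ; case: eqP => // ph; rewrite ph hJ in pJ.
Qed.

Definition point (i : L) : L -> K := fin_comb [:: (1, i)].

Lemma pointE i h : point i h = (i == h)%:R.
Proof. by rewrite /point /fin_comb big_seq1 mul1r. Qed.

(* [conv_delta w e g] is the value at [g] of the convolution [fin_comb w * e]. *)
Definition conv_delta w (e g : L) : K := \sum_(p <- w) p.1 * (sl_op p.2 e == g)%:R.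

Lemma conv_delta_sum w (B : seq L) e g :
  uniq B -> {subset [seq p.2 | p <- w] <= B} ->
  \sum_(b <- B) (sl_op e b == g)%:R * fin_comb w b = conv_delta w e g.
Proof.
move=> uB wB; rewrite /fin_comb /conv_delta.
under eq_bigr => b _ do rewrite mulr_sumr.
rewrite exchange_big /=; apply: eq_big_seq => p pw.
rewrite (bigD1_seq p.2) ?wB ?map_f //= eqxx mulr1 mulrC sl_opC big1 ?addr0 //.
by move=> b; rewrite eq_sym => /negbTE->; rewrite !mulr0.
Qed.

(* The formal sum [1 - \prod_(c <- s) (1 - c)] in [l^1(L)]. *)
Fixpoint local_unit s : seq (K * L) :=
  if s is c :: s' then
    (1, c) :: local_unit s' ++ [seq (- p.1, sl_op c p.2) | p <- local_unit s']
  else [::].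

Lemma conv_delta_local_unit_cons c s e g :
  conv_delta (local_unit (c :: s)) e g =
  (sl_op c e == g)%:R + conv_delta (local_unit s) e g
                      - conv_delta (local_unit s) (sl_op c e) g.
Proof.
rewrite /conv_delta /= big_cons big_cat big_map /= mul1r addrA -sumrN.
congr (_ + _); apply: eq_bigr => p _; by rewrite mulNr (sl_opC _ c) -sl_opA.
Qed.

Lemma conv_delta_local_unit s e g :
  has (sl_le e) s -> conv_delta (local_unit s) e g = (e == g)%:R.
Proof.
elim: s e => [|c s IHs] e //= /orP[/eqP ce|/hasP[c' c's ec']].
  by rewrite conv_delta_local_unit_cons ce addrK.
have has_le i : sl_le i e -> has (sl_le i) s.
  by move=> ie; apply/hasP; exists c' => //; apply: sl_le_trans ie ec'.
rewrite conv_delta_local_unit_cons !IHs ?has_le ?sl_le_opr ?sl_le_refl //.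
by rewrite addrAC subrr add0r.
Qed.

Lemma conv_delta_local_unit_up s f e g :
  (forall i, sl_le f i -> has (sl_le i) s) -> sl_le f g ->
  conv_delta (local_unit s) e g = (e == g)%:R.
Proof.
move=> cover fg; have [fe|fNe] := boolP (sl_le f e).
  exact/conv_delta_local_unit/cover.
have -> : (e == g) = false by apply: contraNF fNe => /eqP ->.
rewrite /conv_delta big1 // => p _; case: eqP => [peg|_]; last by rewrite mulr0.
by move: fNe; rewrite (sl_le_trans fg) // -peg sl_le_opr.
Qed.

End FiniteCombinations.
Arguments point K {L}.
Arguments local_unit K {L}.

Section L1Identity.
Context {K : numFieldType} {L : semilattice} {u : L -> K}.
Hypothesis u_id : l1_identity u.

Lemma sum_conv_terms_point i (J : seq (L * L)) :
  \sum_(p <- J) conv_terms u (point K i) i p =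
  \sum_(p <- J | (p.2 == i) && sl_le i p.1) u p.1.
Proof.
rewrite [RHS]big_mkcond; apply: eq_bigr => -[e j] _; rewrite /conv_terms pointE /=.
by case: (eqVneq j i) => [->|_]; rewrite ?mulr1 ?mulr0 ?if_same.
Qed.

Lemma up_set_finitely_covered f :
  exists E0 : seq L, forall i, sl_le f i -> has (sl_le i) E0.
Proof.
have half_gt0 : 0 < 1 / 2 :> K by rewrite divr_gt0.
have point_sum i : has_usum (conv_terms u (point K i) i) (1 : K^o).
  by have [+ _] := u_id.2 (point K i) (in_l1_fin_comb _) i; rewrite pointE eqxx.
have [X0 X0tail] := has_usum_tail _ _ (point_sum f) _ half_gt0.
exists [seq p.1 | p <- X0] => i fi; apply/negPn/negP => /hasPn iNX0.
have [X1 X1e] := (has_usumP _ _).1 (point_sum i) _ half_gt0.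
set Z := [fset q in X1 | (q.2 == i) && sl_le i q.1]%fset.
set Y := [fset (q.1, f) | q in Z]%fset.
have Y_up p : p \in Y -> (p.2 == f) && sl_le f p.1.
  move=> /imfsetP[q]; rewrite !inE /= => /andP[_ /andP[_ iq]] ->.
  by rewrite eqxx (sl_le_trans fi iq).
have sumYX1 : \sum_(p <- Y) conv_terms u (point K f) f p =
              \sum_(p <- X1) conv_terms u (point K i) i p.
  rewrite !sum_conv_terms_point big_fset_condE [RHS]big_fset_condE -/Z.
  have -> : [fset p in Y | (p.2 == f) && sl_le f p.1]%fset = Y.
    by apply/fsetP => p; rewrite !inE /=; apply: andb_idr; apply: Y_up.
  rewrite big_imfset //= => q q' /[!inE] /and3P[_ /eqP qi _] /and3P[_ /eqP q'i _].
  by case: q q' qi q'i => [a b] [c d] /= -> -> [->].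
have XY : [disjoint X0 & Y]%fset.
  apply/fdisjointP => p pX0; apply: contraNN (iNX0 _ (map_f fst pX0)).
  by case/imfsetP=> q /[!inE] /and3P[_ _ iq] ->.
have := X0tail _ XY; rewrite sumYX1.
have := X1e _ (fsubset_refl X1); set S := \sum_(p <- X1) _ => S1 S0.
have : (1 : K) < 1 / 2 + 1 / 2.
  rewrite -[X in X < _]normr1 -[X in `|X|](subrK S).
  by apply: le_lt_trans (ler_normD _ _) _; apply: ltrD.
by rewrite -splitr ltxx.
Qed.

Lemma l1_identity_local_unit f (E0 : seq L) :
  (forall i, sl_le f i -> has (sl_le i) E0) ->
  forall g, sl_le f g -> u g = fin_comb (local_unit K E0) g.
Proof.
move=> cover g fg; set w := local_unit K E0; set B := undup [seq p.2 | p <- w].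
apply/esym/(has_usum_cofinal _ _ _ (u_id.2 _ (in_l1_fin_comb w) g).1) => J0.
set A := undup (g :: [seq p.1 | p <- J0]).
set J := (J0 `|` [fset p in [seq (a, b) | a <- A, b <- B]])%fset.
exists J; first exact: fsubsetUl.
have JA p : p \in J -> p.1 \in A.
  case/fsetUP => [pJ0|]; first by rewrite mem_undup inE map_f ?orbT.
  by rewrite inE /= => /allpairsP[[a b] [aA _ ->]].
rewrite (bigID (fun p => (p.1 \in A) && (p.2 \in B))) /= [X in _ + X]big_seq_cond.
rewrite [X in _ + X]big1 ?addr0 => [|p /andP[/JA -> pB]]; last first.
  by rewrite /conv_terms fin_comb_notin ?mulr0 ?if_same // -mem_undup.
rewrite big_fset_pairs ?undup_uniq // => [|p pAB]; last first.
  by apply/fsetUP; right; rewrite inE.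
have sum_row a : \sum_(b <- B) conv_terms u (fin_comb w) g (a, b) = u a * (a == g)%:R.
  rewrite -(conv_delta_local_unit_up _ _ a _ cover fg).
  rewrite -(conv_delta_sum _ B) ?undup_uniq //.
    rewrite mulr_sumr; apply: eq_bigr => b _; rewrite /conv_terms.
    by case: eqP; rewrite ?mul1r ?mul0r ?mulr0.
  by move=> b; rewrite mem_undup.
rewrite (bigD1_seq g) ?undup_uniq ?mem_undup ?mem_head //= sum_row eqxx mulr1.
by rewrite big1 ?addr0 // => a /negbTE ag; rewrite sum_row ag mulr0.
Qed.

Lemma l1_identity_local f : exists w : seq (K * L),
  (forall e, sl_le f e -> u e = fin_comb w e) /\
  (forall i, conv_delta w i f = (i == f)%:R).
Proof.
have [E0 cover] := up_set_finitely_covered f.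
exists (local_unit K E0); split; first exact: l1_identity_local_unit.
by move=> i; apply: conv_delta_local_unit_up cover (sl_le_refl f).
Qed.

End L1Identity.

Section Action.
Context {K : numFieldType} {L : semilattice} {V : normedModType K}.
Variables (u nx : L -> K) (w : seq (K * L)) (y : L -> V) (f : L).
Hypothesis u_fin : forall e, sl_le f e -> u e = fin_comb w e.
Hypothesis w_unit : forall i, conv_delta w i f = (i == f)%:R.
Hypothesis y_le : forall h, sl_le f h -> `|y h| <= nx h.
Hypothesis nx_sum : has_usum (conv_terms u nx f) (nx f : K^o).

Definition action_terms (p : L * L) : V :=
  if sl_op p.1 p.2 == f then u p.1 *: y p.2 else 0.

Let Dl := undup [seq p.2 | p <- w].

Lemma action_terms_notin p : p.1 \notin Dl -> action_terms p = 0.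
Proof.
rewrite /action_terms mem_undup; case: eqP => // pf pw.
by rewrite u_fin ?fin_comb_notin ?scale0r // -pf sl_le_opl.
Qed.

Lemma sum_u_unit i : \sum_(d <- Dl) u d * (sl_op d i == f)%:R = (i == f)%:R.
Proof.
rewrite -w_unit -(conv_delta_sum _ Dl) ?undup_uniq // => [|d]; last first.
  by rewrite mem_undup.
apply: eq_bigr => d _; rewrite sl_opC mulrC.
case: eqP => [df|_]; last by rewrite !mul0r.
by rewrite u_fin // -df sl_le_opr.
Qed.

Lemma sum_action_rect (J : {fset L * L}) (B : seq L) :
  uniq B -> f \in B -> {subset [seq (a, b) | a <- Dl, b <- B] <= J} ->
  \sum_(p <- J | (p.1 \in Dl) && (p.2 \in B)) action_terms p = y f.
Proof.
move=> uB fB DlBJ; rewrite big_fset_pairs ?undup_uniq // exchange_big /=.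
rewrite (eq_bigr (fun b => (b == f)%:R *: y b)) => [|b _]; last first.
  rewrite -sum_u_unit scaler_suml; apply: eq_bigr => d _; rewrite /action_terms /=.
  by case: eqP; rewrite ?mulr1 ?mulr0 ?scale0r.
rewrite (bigD1_seq f) //= eqxx scale1r big1 ?addr0 // => b /negbTE ->.
exact: scale0r.
Qed.

Lemma norm_sum_action_slice (r : seq (L * L)) (P : pred (L * L)) d :
  `|\sum_(p <- r | P p && (p.1 == d)) action_terms p| <=
  `|\sum_(p <- r | P p && (p.1 == d)) conv_terms u nx f p|.
Proof.
set N := \sum_(p <- r | P p && (p.1 == d)) (if sl_op d p.2 == f then nx p.2 else 0).
have N_ge0 : 0 <= N.
  apply: sumr_ge0 => p _; case: eqP => // dpf.
  by rewrite (le_trans _ (y_le _ _)) // -dpf sl_le_opr.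
have -> : \sum_(p <- r | P p && (p.1 == d)) conv_terms u nx f p = u d * N.
  rewrite mulr_sumr; apply: eq_bigr => p /andP[_ /eqP pd].
  by rewrite /conv_terms pd; case: eqP; rewrite ?mulr0.
rewrite normrM (ger0_norm N_ge0) mulr_sumr.
apply: (le_trans (ler_norm_sum _ _ _)); apply: ler_sum => p /andP[_ /eqP pd].
rewrite /action_terms pd; case: eqP => [dpf|_]; last by rewrite normr0 mulr0.
by rewrite normrZ ler_wpM2l // y_le // -dpf sl_le_opr.
Qed.

Lemma has_usum_action : has_usum action_terms (y f).
Proof.
apply/has_usumP => e e0; set n := size Dl.
have de0 : 0 < e / n.+1%:R by rewrite divr_gt0.
have [X0 X0tail] := has_usum_tail _ _ nx_sum _ de0.
set B := undup (f :: [seq p.2 | p <- X0]).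
exists [fset p in [seq (a, b) | a <- Dl, b <- B]]%fset => J DlBJ.
rewrite (bigID (fun p => (p.1 \in Dl) && (p.2 \in B))) /=.
rewrite sum_action_rect ?undup_uniq ?mem_undup ?mem_head // => [|p pDlB]; last first.
  by apply: (fsubsetP DlBJ); rewrite inE.
rewrite opprD addrA subrr sub0r normrN.
have -> : \sum_(p <- J | ~~ ((p.1 \in Dl) && (p.2 \in B))) action_terms p =
          \sum_(p <- J | (p.1 \in Dl) && (p.2 \notin B)) action_terms p.
  rewrite big_mkcond [RHS]big_mkcond; apply: eq_bigr => p _.
  by case: (boolP (p.1 \in Dl)) => [_|/action_terms_notin->]; rewrite ?if_same.
rewrite (big_seq_partition _ Dl _ fst); [|exact: undup_uniq|by move=> p /andP[]].
apply: (le_lt_trans (ler_norm_sum _ _ _)).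
apply: (@le_lt_trans _ _ (\sum_(d <- Dl) e / n.+1%:R)).
  apply: ler_sum => d _; apply: (le_trans (norm_sum_action_slice _ _ _)).
  rewrite big_fset_condE ltW // X0tail //; apply/fdisjointP => p pX0.
  have pB : p.2 \in B by rewrite mem_undup inE map_f ?orbT.
  by rewrite !inE pB /= andbF /= andbF.
rewrite big_const_seq count_predT iter_addr_0 -/n -[_ *+ n]mulr_natr.
by rewrite mulrAC ltr_pdivrMr // ltr_pM2l // ltr_nat.
Qed.

End Action.

Theorem lemma2p6 (K : numFieldType) (L : semilattice) (D : sl_diagram K L)
  (u : L -> K) :
  l1_identity u ->
  forall x : forall e : L, dg_alg D e, in_convalg D x ->
    left_act_is D u x x /\ right_act_is D x u x.
Proof.
move=> u_id x [M xM].
have nx_l1 : in_l1 (fun e => `|x e|).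
  by exists M => J; rewrite /partial_sum; under eq_bigr do rewrite normr_id; apply: xM.
have act_left : left_act_is D u x x.
  move=> f; have [w [u_fin w_unit]] := l1_identity_local u_id f.
  pose y h := dg_phi D f h (x h).
  have y_le h : sl_le f h -> `|y h| <= `|x h| by move=> fh; apply: dg_phi_contr.
  have := has_usum_action _ _ _ _ _ u_fin w_unit y_le (u_id.2 _ nx_l1 f).1.
  rewrite /y dg_phi_id; apply: eq_has_usum => p.
  by rewrite /action_terms /left_act_terms sl_opC.
by split=> // f; apply: (has_usum_invol (fun p => (p.2, p.1))) (act_left f) => -[].
Qed.
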